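(* For positive integers $\ell,m$, let $A(\ell,m)$ be the $(\ell+m)\times(\ell+m)$ coloring matrix with entries $a_{ij}=0$ if $i,j>\ell$ and $a_{ij}=1$ otherwise. Then for all positive integers $\ell,m,n$ and $1\le i\le\ell$, $$t_{A(\ell,m)}^{(i)}(n)=\frac1n\sum_{k=1}^{n}(m-\ell)^{n-k}\ell^{k-1}\binom{n}{k}\binom{2n+k-2}{k-1};$$ for $\ell+1\le i\le\ell+m$ and $n\ge2$, $$t_{A(\ell,m)}^{(i)}(n)=\frac{1}{n-1}\sum_{k=1}^{n-1}(m-\ell)^{n-k-1}\ell^{k}\binom{n-1}{k}\binom{2n+k-2}{k-1};$$ and for $n\ge2$, $$t_{A(\ell,m)}(n)=\sum_{k=1}^{n}\frac{(2m-\ell)n-mk+(\ell-m)}{n(n-1)}(m-\ell)^{n-k-1}\ell^{k}\binom{n}{k}\binom{2n+k-2}{k-1}.$$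
   Context: A plane tree is an unlabeled rooted tree in which the children of every vertex are linearly ordered. A coloring matrix is a square matrix $A=(a_{ij})$ with entries in $\{0,1\}$. An $A$-coloring of a plane tree assigns to each vertex a color (an index of a row of $A$) such that whenever a vertex of color $j$ is a child of a vertex of color $i$, $a_{ij}=1$. Let $t_A(n)$ be the number of pairs (plane tree with $n$ vertices, $A$-coloring of it) and $t_A^{(i)}(n)$ the number of those with root color $i$. Here $0^0=1$. *)

From mathcomp Require Import all_boot all_order all_algebra.
Set Implicit Arguments. Unset Strict Implicit. Unset Printing Implicit Defensive.

(* A plane tree whose vertices carry colors in 'I_k: a root color together
   with the ordered list of (colored) subtrees of the root's children.
   Such an object is exactly a pair (plane tree, assignment of a color to
   each vertex). *)
Inductive ctree (k : nat) : Type := CNode of 'I_k & seq (ctree k).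

Definition croot k (t : ctree k) : 'I_k := let: CNode c _ := t in c.

Fixpoint csize k (t : ctree k) : nat :=
  let: CNode _ ts := t in (sumn (map (@csize k) ts)).+1.

(* A coloring matrix is a square 0/1 matrix, entries as booleans (1 = true).
   The coloring is an A-coloring iff for every parent of color i and child
   of color j, a_{ij} = 1. *)
Fixpoint cvalid k (A : 'M[bool]_k) (t : ctree k) : bool :=
  let: CNode c ts := t in all (fun u => A c (croot u) && cvalid A u) ts.

Definition has_card (T : Type) (P : T -> Prop) (N : nat) : Prop :=
  exists f : 'I_N -> T, injective f /\ (forall x, P x <-> exists i, f i = x).

Definition tA_is k (A : 'M[bool]_k) (n N : nat) : Prop :=
  has_card (fun t : ctree k => cvalid A t /\ csize t = n) N.

Definition tAi_is k (A : 'M[bool]_k) (i : 'I_k) (n N : nat) : Prop :=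
  has_card (fun t : ctree k => [/\ cvalid A t, csize t = n & croot t = i]) N.

(* A(l,m): colors are 0-based ('I_(l+m)); paper's color i is our i-1.
   a_{ij} = 0 iff both i,j > l (paper indexing), i.e. l <= i, l <= j here. *)
Definition Alm (l m : nat) : 'M[bool]_(l + m) :=
  \matrix_(i, j) ~~ ((l <= i) && (l <= j))%N.

From mathcomp Require Import all_boot all_order all_algebra.
From mathcomp Require Import ring zify.
Set Implicit Arguments. Unset Strict Implicit. Unset Printing Implicit Defensive.

(* Removing the root of an A(l,m)-colored tree leaves a forest hanging below it, and the
   number of such forests with n vertices only depends on whether the root color is low
   (< l) or high.  Their generating functions P and Q satisfy
     P = 1 + x (l P + m Q) P,        Q = 1 + x l P Q,
   so u = x l P, the series of trees with a low root, satisfies u = x phi(u) with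
   phi(t) = (l + (m - l) t) / (1 - t)^2, and Q = 1 / (1 - u).  The Lagrange-Buermann formula
   n [x^n] H(u) = [t^(n-1)] H'(t) phi(t)^n for H(t) = t and H(t) = 1 / (1 - t) turns
   l P_(n-1) and Q_n into coefficients of (l + (m - l) t)^n (1 - t)^-(2n+e), which expand
   binomially into the stated sums.  Power series are polynomials compared modulo X^K. *)

Section Cardinality.

Variable T : Type.
Implicit Types P Q : T -> Prop.

Lemma eq_has_card P Q N :
  (forall x, P x <-> Q x) -> has_card P N -> has_card Q N.
Proof.
move=> PQ [f [f_inj f_onto]]; exists f; split=> // x.
by rewrite -PQ f_onto.
Qed.

Lemma has_card0 P : (forall x, ~ P x) -> has_card P 0.
Proof.
move=> notP; have f : 'I_0 -> T by case.
by exists f; split=> [[]|x] //; split=> [/notP|[[]]].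
Qed.

Lemma has_card1 P x0 : (forall x, P x <-> x = x0) -> has_card P 1.
Proof.
move=> Px; exists (fun _ => x0); split=> [i j _|x]; first by rewrite !ord1.
by rewrite Px; split=> [->|[_ <-]]; first exists ord0.
Qed.

Lemma has_cardU P Q a b :
  (forall x, P x -> Q x -> False) ->
  has_card P a -> has_card Q b -> has_card (fun x => P x \/ Q x) (a + b).
Proof.
move=> PQ0 [f [f_inj f_onto]] [g [g_inj g_onto]].
pose h i := match split i with inl j => f j | inr j => g j end.
have P_f j : P (f j) by apply/f_onto; exists j.
have Q_g j : Q (g j) by apply/g_onto; exists j.
exists h; split=> [i1 i2|x].
  rewrite /h -(splitK i1) -(splitK i2).
  case: (split i1) => j1; case: (split i2) => j2; rewrite !unsplitK => e.
  - by rewrite (f_inj _ _ e).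
  - by case: (PQ0 (f j1)); rewrite // e.
  - by case: (PQ0 (f j2)); rewrite // -e.
  - by rewrite (g_inj _ _ e).
split=> [[/f_onto [j <-]|/g_onto [j <-]]|[i <-]].
- by exists (lshift b j); rewrite /h (unsplitK (inl j)).
- by exists (rshift a j); rewrite /h (unsplitK (inr j)).
- by rewrite /h; case: (split i) => j; [left|right].
Qed.

Lemma has_card_bigU (I : eqType) (r : seq I) (P : I -> T -> Prop) (a : I -> nat) :
  uniq r -> (forall i j x, P i x -> P j x -> i = j) ->
  (forall i, i \in r -> has_card (P i) (a i)) ->
  has_card (fun x => exists2 i, i \in r & P i x) (\sum_(i <- r) a i).
Proof.
move=> + Pdisj; elim: r => [_ _|i r IHr /= /andP [ir r_uniq] cardP].
  by rewrite big_nil; apply: has_card0 => x [].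
rewrite big_cons; apply: eq_has_card; last first.
  apply: has_cardU (cardP i (mem_head _ _)) (IHr r_uniq _) => [x Pix [j jr Pjx]|j jr].
    by move: ir; rewrite (Pdisj _ _ _ Pix Pjx) jr.
  by apply: cardP; rewrite inE jr orbT.
move=> x; split=> [[Pix|[j jr Pjx]]|[j]]; first by exists i; rewrite ?mem_head.
  by exists j; rewrite // inE jr orbT.
by rewrite inE => /predU1P [-> | jr] Pjx; [left | right; exists j].
Qed.

Lemma has_card_image T' (P : T' -> Prop) N (g : T' -> T) :
  injective g -> has_card P N -> has_card (fun y => exists x, P x /\ y = g x) N.
Proof.
move=> g_inj [f [f_inj f_onto]]; exists (g \o f); split=> [i j /g_inj /f_inj //|y].
split=> [[x [/f_onto [j <-] ->]]|[j <-]]; first by exists j.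
by exists (f j); split=> //; apply/f_onto; exists j.
Qed.

Lemma has_card_image2 T1 T2 (P1 : T1 -> Prop) (P2 : T2 -> Prop) a b
    (G : T1 -> T2 -> T) :
  (forall x y x' y', G x y = G x' y' -> x = x' /\ y = y') ->
  has_card P1 a -> has_card P2 b ->
  has_card (fun z => exists x y, [/\ P1 x, P2 y & z = G x y]) (a * b).
Proof.
move=> G_inj [f1 [f1_inj f1_onto]] [f2 [f2_inj f2_onto]].
have -> : a * b = #|{: 'I_a * 'I_b}| by rewrite card_prod !card_ord.
pose h (k : 'I_#|{: 'I_a * 'I_b}|) := let: (i, j) := enum_val k in G (f1 i) (f2 j).
exists h; split=> [k1 k2|z].
  rewrite /h; case e1: (enum_val k1) => [i1 j1]; case e2: (enum_val k2) => [i2 j2].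
  by move=> /G_inj [/f1_inj ei /f2_inj ej]; apply: enum_val_inj; rewrite e1 e2 ei ej.
split=> [[x [y [/f1_onto [i <-] /f2_onto [j <-] ->]]]|[k <-]].
  by exists (enum_rank (i, j)); rewrite /h enum_rankK.
rewrite /h; case: (enum_val k) => i j; exists (f1 i), (f2 j).
by split=> //; [apply/f1_onto | apply/f2_onto]; eexists.
Qed.

End Cardinality.

Section ColoredForests.

Variables (k : nat) (A : 'M[bool]_k).
Implicit Types (c d : 'I_k) (t : ctree k) (ts : seq (ctree k)).

Definition valid_tree c n t := [/\ cvalid A t, csize t = n & croot t = c].

Definition valid_forest c n ts :=
  all (fun u => A c (croot u) && cvalid A u) ts /\ sumn (map (@csize k) ts) = n.

Lemma csize_gt0 t : 0 < csize t.
Proof. by case: t. Qed.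

Lemma CNode_inj c : injective (@CNode k c).
Proof. by move=> ts ts' []. Qed.

Lemma valid_treeS c n t :
  valid_tree c n.+1 t <-> exists ts, valid_forest c n ts /\ t = CNode c ts.
Proof.
split=> [|[ts [[valid_ts size_ts] ->]]]; last by split=> //=; rewrite size_ts.
by case: t => c' ts [/= valid_ts [size_ts] <-]; exists ts.
Qed.

Lemma valid_forest0 c ts : valid_forest c 0 ts <-> ts = [::].
Proof.
split=> [|-> //]; case: ts => [//|t ts [_ /=]].
by have := csize_gt0 t; case: (csize t).
Qed.

Lemma valid_forestS c n ts :
  valid_forest c n.+1 ts <-> exists2 s, s \in index_iota 0 n.+1 &
    exists t ts', [/\ exists2 d, d \in index_enum 'I_k & A c d /\ valid_tree d s.+1 t,
                      valid_forest c (n - s) ts' & ts = t :: ts'].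
Proof.
split=> [|[s]]; last first.
  rewrite mem_index_iota ltnS => le_sn [t [ts' [[d _ [Acd [vt st rt]]] [vts' sts'] ->]]].
  by split; rewrite /= ?rt ?Acd ?vt ?vts' ?st ?sts' ?addSn ?subnKC.
case: ts => [[_ //]|t ts' [/= /andP [/andP [Act vt] vts'] size_ts]].
have := csize_gt0 t; case st: (csize t) => [//|s] _.
move: size_ts; rewrite st addSn => -[size_ts].
exists s; first by rewrite mem_index_iota ltnS -size_ts leq_addr.
exists t, ts'; split=> //; first by exists (croot t); rewrite ?mem_index_enum.
by split=> //; rewrite -size_ts addKn.
Qed.

Section Counting.

Variable F : 'I_k -> nat -> nat.
Hypothesis F0 : forall c, F c 0 = 1.
Hypothesis FS : forall c n,
  F c n.+1 = \sum_(s < n.+1) (\sum_(d | A c d) F d s) * F c (n - s).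

Lemma has_card_valid_forest n c : has_card (valid_forest c n) (F c n).
Proof.
elim/ltn_ind: n c => -[_ c|n IHn c].
  by rewrite F0; apply: has_card1 (valid_forest0 c).
have card_tree s d : s <= n -> has_card (valid_tree d s.+1) (F d s).
  move=> le_sn; apply: eq_has_card _ (has_card_image (@CNode_inj d) (IHn s _ d)).
    by move=> t; rewrite valid_treeS; split=> -[ts [? ?]]; exists ts.
  by rewrite ltnS.
apply: eq_has_card (fun ts => iff_sym (valid_forestS c n ts)) _.
rewrite FS -(big_mkord xpredT (fun s => (\sum_(d | A c d) F d s) * F c (n - s))).
apply: has_card_bigU (iota_uniq _ _) _ _ => [s s' ts|s].
  move=> [t [ts' [[d _ [_ [_ st _]]] _ ->]]] [t' [ts'' [[d' _ [_ [_ st' _]]] _ []]]].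
  by move=> et _; move: st'; rewrite -et st => -[].
rewrite subn0 mem_iota ltnS => le_sn.
apply: has_card_image2 => [t ts t' ts' [-> ->] //||]; last first.
  by apply: IHn; rewrite ltnS leq_subr.
rewrite big_mkcond /=; apply: has_card_bigU (index_enum_uniq _) _ _ => [d d' t|d _].
  by move=> [_ [_ _ <-]] [_ [_ _ <-]].
case: (A c d); last by apply: has_card0 => t [].
by apply: eq_has_card _ (card_tree s d le_sn) => t; split=> [|[]].
Qed.

Lemma has_card_valid_tree n c : has_card (valid_tree c n.+1) (F c n).
Proof.
apply: eq_has_card _ (has_card_image (@CNode_inj c) (has_card_valid_forest n c)).
by move=> t; rewrite valid_treeS; split=> -[ts [? ?]]; exists ts.
Qed.

Lemma has_card_valid n :
  has_card (fun t => cvalid A t /\ csize t = n.+1) (\sum_c F c n).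
Proof.
apply: eq_has_card _ (has_card_bigU (P := fun c => valid_tree c n.+1)
                       (index_enum_uniq _) _ _) => [t|c c' t|c _].
- split=> [[c _ [vt st _]]|[vt st]] //.
  by exists (croot t); rewrite ?mem_index_enum.
- by move=> [_ _ <-] [_ _ <-].
- exact: has_card_valid_tree.
Qed.

End Counting.

End ColoredForests.

Section AlmCounts.

Variables l m : nat.

(* The numbers of forests with n vertices that may hang below a vertex of color < l (first
   component) and of color >= l (second component); any fuel f >= n gives the same value. *)
Fixpoint nforest_fuel (f n : nat) : nat * nat :=
  if f is f'.+1 then
    if n is n'.+1 then
      (\sum_(s < n'.+1) (l * (nforest_fuel f' s).1 + m * (nforest_fuel f' s).2)
                        * (nforest_fuel f' (n' - s)).1,
       \sum_(s < n'.+1) l * (nforest_fuel f' s).1 * (nforest_fuel f' (n' - s)).2)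
    else (1, 1)
  else (1, 1).

Definition nforest_low n := (nforest_fuel n n).1.
Definition nforest_high n := (nforest_fuel n n).2.

Lemma nforest_fuel_enough f f' n :
  n <= f -> n <= f' -> nforest_fuel f n = nforest_fuel f' n.
Proof.
elim: f f' n => [|f IHf] [|f'] [|n] //=; rewrite !ltnS => le_nf le_nf'.
have le_s (s : 'I_n.+1) : s <= n by rewrite -ltnS.
by congr pair; apply: eq_bigr => s _;
  rewrite !(IHf f') ?(leq_trans (le_s s)) ?(leq_trans (leq_subr s n)).
Qed.

Lemma nforest_lowS n : nforest_low n.+1 =
  \sum_(s < n.+1) (l * nforest_low s + m * nforest_high s) * nforest_low (n - s).
Proof.
rewrite /nforest_low /nforest_high /=; apply: eq_bigr => s _.
by rewrite (@nforest_fuel_enough n s) ?(@nforest_fuel_enough n (n - s)) ?leq_subr // -ltnS.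
Qed.

Lemma nforest_highS n : nforest_high n.+1 =
  \sum_(s < n.+1) l * nforest_low s * nforest_high (n - s).
Proof.
rewrite /nforest_low /nforest_high /=; apply: eq_bigr => s _.
by rewrite (@nforest_fuel_enough n s) ?(@nforest_fuel_enough n (n - s)) ?leq_subr // -ltnS.
Qed.

Definition nforest_Alm (c : 'I_(l + m)) n :=
  if c < l then nforest_low n else nforest_high n.

Lemma sum_Alm_colors (F : 'I_(l + m) -> nat) a b :
  (forall c : 'I_(l + m), c < l -> F c = a) ->
  (forall c : 'I_(l + m), l <= c -> F c = b) ->
  \sum_(c < l + m) F c = l * a + m * b.
Proof.
move=> Flow Fhigh; rewrite big_split_ord /=.
rewrite (eq_bigr (fun _ => a)) => [|c _]; last by rewrite Flow /=.
rewrite [X in _ + X](eq_bigr (fun _ => b)) => [|c _]; last by rewrite Fhigh /= ?leq_addr.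
by rewrite !sum_nat_const !card_ord.
Qed.

Lemma nforest_AlmS c n : nforest_Alm c n.+1 =
  \sum_(s < n.+1) (\sum_(d | Alm l m c d) nforest_Alm d s) * nforest_Alm c (n - s).
Proof.
have Alm_low (d : 'I_(l + m)) : d < l -> Alm l m c d.
  by move=> lt_dl; rewrite mxE [l <= d]leqNgt lt_dl andbF.
rewrite /nforest_Alm; case: ltnP => [lt_cl|le_lc].
  rewrite nforest_lowS; apply: eq_bigr => s _; congr (_ * _).
  rewrite big_mkcond /= (sum_Alm_colors (a := nforest_low s) (b := nforest_high s)) // => d.
    by move=> lt_dl; rewrite Alm_low ?lt_dl.
  by rewrite mxE [l <= c]leqNgt lt_cl => le_ld; rewrite ltnNge le_ld.
rewrite nforest_highS; apply: eq_bigr => s _; congr (_ * _).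
rewrite big_mkcond /= (sum_Alm_colors (a := nforest_low s) (b := 0)) ?muln0 ?addn0 // => d.
  by move=> lt_dl; rewrite Alm_low ?lt_dl.
by move=> le_ld; rewrite mxE le_lc le_ld.
Qed.

Lemma nforest_Alm0 c : nforest_Alm c 0 = 1.
Proof. by rewrite /nforest_Alm if_same. Qed.

Lemma has_card_Alm_tree c n :
  has_card (valid_tree (Alm l m) c n.+1) (nforest_Alm c n).
Proof. exact: has_card_valid_tree nforest_Alm0 nforest_AlmS n c. Qed.

Lemma has_card_Alm n :
  has_card (fun t => cvalid (Alm l m) t /\ csize t = n.+1)
           (l * nforest_low n + m * nforest_high n).
Proof.
rewrite -(sum_Alm_colors (F := nforest_Alm^~ n)) => [|c|c]; rewrite /nforest_Alm.
- exact: has_card_valid nforest_Alm0 nforest_AlmS n.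
- by move=> ->.
- by rewrite ltnNge => ->.
Qed.

End AlmCounts.

Import GRing.Theory Num.Theory.
Local Open Scope ring_scope.

Section TruncatedSeries.

Variable R : idomainType.
Implicit Types p q r w : {poly R}.

Definition eqmodX (K : nat) p q := 'X^K %| p - q.

Lemma eqmodX_coefP K p q :
  eqmodX K p q <-> forall i, (i < K)%N -> p`_i = q`_i.
Proof.
rewrite /eqmodX /dvdp -Pdiv.IdomainMonic.take_poly_modp; split=> [/eqP pq i ltiK|pq].
  by apply/eqP; rewrite -subr_eq0 -coefB; have := coef_take_poly K (p - q) i;
     rewrite ltiK pq coef0 => <-.
apply/eqP/polyP => i; rewrite coef_take_poly coef0 coefB.
by case: ifP => // /pq ->; rewrite subrr.
Qed.

Lemma eqmodX_coef K p q i : eqmodX K p q -> (i < K)%N -> p`_i = q`_i.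
Proof. by move/eqmodX_coefP; apply. Qed.

Lemma eqmodX_refl K p : eqmodX K p p.
Proof. by rewrite /eqmodX subrr dvdp0. Qed.

Lemma eqmodX_sym K p q : eqmodX K p q -> eqmodX K q p.
Proof. by rewrite /eqmodX -opprB dvdpNr. Qed.

Lemma eqmodX_trans K p q r : eqmodX K p q -> eqmodX K q r -> eqmodX K p r.
Proof. by move=> pq qr; rewrite /eqmodX -(subrK q p) -addrA; apply: dvdp_add. Qed.

Lemma eqmodXM K p p' q q' :
  eqmodX K p p' -> eqmodX K q q' -> eqmodX K (p * q) (p' * q').
Proof.
move=> pp' qq'; rewrite /eqmodX (_ : _ - _ = (p - p') * q + p' * (q - q')); last by ring.
by apply: dvdp_add; [apply: dvdp_mulr | apply: dvdp_mull].
Qed.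

Lemma eqmodXX K p q n : eqmodX K p q -> eqmodX K (p ^+ n) (q ^+ n).
Proof.
move=> pq; elim: n => [|n IHn]; first exact: eqmodX_refl.
by rewrite !exprS eqmodXM.
Qed.

Lemma eqmodX_comp K p q w :
  eqmodX K p q -> eqmodX K (p \Po ('X * w)) (q \Po ('X * w)).
Proof.
move=> /(Pdiv.IdomainMonic.dvdpP (monicXn R K)) [r pq].
rewrite /eqmodX -comp_polyB pq comp_polyM comp_Xn_poly exprMn.
by rewrite mulrA mulrAC; apply: dvdp_mull.
Qed.

Lemma eqmodX_inv K p q d :
  eqmodX K (p * d) 1 -> eqmodX K (q * d) 1 -> eqmodX K p q.
Proof.
move=> pd qd; rewrite /eqmodX (_ : _ - _ = q * (p * d - 1) - p * (q * d - 1)); last by ring.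
by apply: dvdp_sub; apply: dvdp_mull.
Qed.

End TruncatedSeries.

Section NegativeBinomialSeries.

Context {R : idomainType}.

(* The truncation at order K of the series of (1 - X)^-e. *)
Definition negbin (e K : nat) : {poly R} := \poly_(j < K) 'C((e + j).-1, j)%:R.

Lemma negbin_step e K : eqmodX K (negbin e.+1 K * (1 - 'X)) (negbin e K).
Proof.
apply/eqmodX_coefP => -[|j] ltjK; rewrite mulrBr mulr1 coefB coefMX !coef_poly ltjK.
  by rewrite !bin0 subr0.
by rewrite /= ltnW // addnS binS natrD addrK.
Qed.

Lemma negbin_inv e K : eqmodX K (negbin e K * (1 - 'X) ^+ e) 1.
Proof.
elim: e => [|e IHe].
  apply/eqmodX_coefP => j ltjK; rewrite mulr1 coef_poly coef1 ltjK.
  by case: j {ltjK} => [|j] //=; rewrite bin_small.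
rewrite exprS mulrA; apply: eqmodX_trans IHe.
exact: eqmodXM (negbin_step e K) (eqmodX_refl _ _).
Qed.

Lemma negbinD a b K : eqmodX K (negbin a K * negbin b K) (negbin (a + b) K).
Proof.
apply: (eqmodX_inv (d := (1 - 'X) ^+ (a + b))) (negbin_inv _ _).
rewrite exprD (_ : _ * _ = (negbin a K * (1 - 'X) ^+ a) * (negbin b K * (1 - 'X) ^+ b)).
  by rewrite -[1 in X in eqmodX _ _ X]mulr1; apply: eqmodXM; apply: negbin_inv.
by ring.
Qed.

Lemma negbinX e n K : eqmodX K (negbin e K ^+ n) (negbin (e * n) K).
Proof.
elim: n => [|n IHn].
  by rewrite muln0 expr0 -[negbin 0 K]mulr1; apply/eqmodX_sym/(negbin_inv 0 K).
rewrite exprSr mulnS addnC; apply: eqmodX_trans (negbinD _ _ _).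
exact: eqmodXM IHn (eqmodX_refl _ _).
Qed.

Lemma deriv_negbin e K : eqmodX K.-1 (negbin e K)^`() (negbin e.+1 K *+ e).
Proof.
apply/eqmodX_coefP => j ltjK; rewrite coef_deriv coefMn !coef_poly.
have ltj1K : (j.+1 < K)%N by lia.
rewrite ltj1K ltnW // -!mulrnA addnS addSn /=.
by rewrite mulnC -mul_bin_diag mul_bin_down addnK mulnC.
Qed.

End NegativeBinomialSeries.

Lemma sum_ord_extend (V : nmodType) (F : nat -> V) a b : (a <= b)%N ->
  (forall i, (a <= i < b)%N -> F i = 0) -> \sum_(i < a) F i = \sum_(i < b) F i.
Proof.
move=> le_ab F0; rewrite -!(big_mkord xpredT) (big_cat_nat (leq0n a) le_ab) /=.
by rewrite [X in _ + X]big1_seq ?addr0 // => i /andP [_]; rewrite mem_index_iota; apply: F0.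
Qed.

Lemma deriv_exp_mul_exp (R : comNzRingType) (phi : {poly R}) k M : (0 < k)%N ->
  (phi ^+ k)^`() * phi ^+ M *+ (M + k) = (phi ^+ (M + k))^`() *+ k.
Proof.
case: k => // k _; rewrite !deriv_exp addnS /= mulrnAl -mulrA -exprD addnC.
by rewrite -!mulrnA mulnC.
Qed.

Lemma coef0_compXM (R : comNzRingType) (p w : {poly R}) : (p \Po ('X * w))`_0 = p`_0.
Proof. by rewrite -!horner_coef0 horner_comp hornerM hornerX mul0r. Qed.

Section LagrangeInversion.

Variable R : fieldType.
Hypothesis R_char0 : has_pchar0 R.
Implicit Types phi w H : {poly R}.

Let natr_neq0 n : (0 < n)%N -> n%:R != 0 :> R.
Proof. by move/pcharf0P: R_char0 => ->; rewrite -lt0n. Qed.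

(* The coefficient of x^n in u^k when u = x phi(u), degenerate cases k = 0 and k > n
   included. *)
Definition lagrange_coef phi (n k : nat) : R :=
  if k == 0%N then (n == 0%N)%:R
  else if (n < k)%N then 0 else k%:R / n%:R * (phi ^+ n)`_(n - k).

Lemma sum_lagrange_coef phi H n : (0 < n)%N ->
  \sum_(i < size H) H`_i * lagrange_coef phi n i
    = n%:R^-1 * (H^`() * phi ^+ n)`_n.-1.
Proof.
move=> n_gt0; have [n' def_n] : exists n', n = n'.+1 by exists n.-1; rewrite prednK.
pose F i := H`_i * lagrange_coef phi n i.
rewrite (@sum_ord_extend _ F (size H) (size H + n.+1) (leq_addr _ _)); last first.
  by move=> i /andP [le_Hi _]; rewrite /F nth_default ?mul0r.
rewrite -(@sum_ord_extend _ F n.+1 _ (leq_addl _ _)) /F; last first.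
  by move=> [|i] /andP [lt_ni _] //; rewrite /lagrange_coef /= lt_ni mulr0.
have -> : (H^`() * phi ^+ n)`_n.-1 = ('X * H^`() * phi ^+ n)`_n.
  by rewrite -mulrA coefXM def_n.
rewrite coefM mulr_sumr.
apply: eq_bigr => -[[|i] /= lt_in] _.
  by rewrite /lagrange_coef def_n coefXM /= mul0r !mulr0.
rewrite /lagrange_coef ltnNge -ltnS lt_in /= coefXM coef_deriv /=.
by rewrite -mulr_natr; field; apply: natr_neq0.
Qed.

Lemma lagrange_inversion K phi w :
  eqmodX K ('X * w) ('X * (phi \Po ('X * w))) ->
  forall n k, (n < K)%N -> (('X * w) ^+ k)`_n = lagrange_coef phi n k.
Proof.
move=> u_fix; elim/ltn_ind=> n IHn [|k] ltnK.
  by rewrite expr0 coef1 /lagrange_coef.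
rewrite /lagrange_coef /=; case: ltnP => [lt_nk|le_kn].
  by rewrite exprMn coefXnM lt_nk.
(* [x^n] u^k = [x^(n-k)] phi^k(u): expand phi^k(u) in powers of u, whose coefficients at
   n - k < n are known by induction. *)
rewrite (eqmodX_coef (eqmodXX k.+1 u_fix)) // exprMn -rmorphXn coefXnM ltnNge le_kn /=.
case def_M: (n - k.+1)%N => [|M].
  have -> : n = k.+1 by apply/eqP; rewrite eqn_leq le_kn -subn_eq0 def_M.
  by rewrite coef0_compXM divff ?mul1r ?natr_neq0.
have def_n : n = (M.+1 + k.+1)%N by rewrite -def_M subnK.
have lt_Mn : (M.+1 < n)%N by rewrite def_n -addSnnS leq_addr.
rewrite coef_comp_poly.
under eq_bigr => i _ do rewrite IHn ?(ltn_trans lt_Mn ltnK) //.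
rewrite sum_lagrange_coef //=.
have e : ((phi ^+ k.+1)^`() * phi ^+ M.+1)`_M *+ n
         = (phi ^+ n)`_M.+1 *+ M.+1 *+ k.+1.
  by rewrite -coefMn def_n deriv_exp_mul_exp // coefMn coef_deriv.
have n_gt0 : (0 < n)%N by rewrite def_n.
move: e; rewrite -[_ *+ n]mulr_natr => /(canRL (mulfK (natr_neq0 n_gt0))) ->.
by rewrite -mulrnA -(mulr_natr ((phi ^+ n)`_M.+1)) natrM; field; rewrite nat1r !natr_neq0.
Qed.

Lemma lagrange_burmann K phi w H n :
  eqmodX K ('X * w) ('X * (phi \Po ('X * w))) -> (0 < n < K)%N ->
  n%:R * (H \Po ('X * w))`_n = (H^`() * phi ^+ n)`_n.-1.
Proof.
move=> u_fix /andP [n_gt0 ltnK]; rewrite coef_comp_poly.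
under eq_bigr => i _ do rewrite (lagrange_inversion u_fix) //.
by rewrite sum_lagrange_coef // mulrA divff ?mul1r ?natr_neq0.
Qed.

End LagrangeInversion.

Lemma coef_affine_exp_mul (R : comNzRingType) (a b : R) (r : {poly R}) n : (0 < n)%N ->
  ((a%:P * 'X + b%:P) ^+ n * r)`_n.-1
    = \sum_(1 <= k < n.+1) a ^+ (n - k) * b ^+ k * 'C(n, k)%:R * r`_(k - 1).
Proof.
case: n => // n _; rewrite exprDn mulr_suml coef_sum.
have term (i : 'I_n.+2) : (((a%:P * 'X) ^+ (n.+1 - i) * b%:P ^+ i *+ 'C(n.+1, i)) * r)`_n
    = if i == 0%N :> nat then 0 else a ^+ (n.+1 - i) * b ^+ i * 'C(n.+1, i)%:R * r`_(i - 1).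
  rewrite exprMn_comm; last exact: mulrC.
  rewrite -!polyC_exp mulrnAl -!mulrA coefMn coefCM mulrCA coefCM coefXnM.
  case: i => -[|i] /= lt_in; first by rewrite ltnSn !mulr0 mul0rn.
  have -> : (n < n.+1 - i.+1)%N = false by lia.
  have -> : (n - (n.+1 - i.+1))%N = i by lia.
  by rewrite subn1 -mulr_natr; ring.
rewrite (eq_bigr _ (fun i _ => term i)) big_ord_recl /= add0r big_add1 big_mkord.
by apply: eq_bigr => i _; rewrite subn1.
Qed.

Section AlmSeries.

Variables l m K : nat.

Local Notation L := (l%:R%:P : {poly rat}).
Local Notation M := (m%:R%:P : {poly rat}).

Definition low_series : {poly rat} := \poly_(i < K) (nforest_low l m i)%:R.
Definition high_series : {poly rat} := \poly_(i < K) (nforest_high l m i)%:R.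
Definition low_trees : {poly rat} := 'X * (L * low_series).
Definition Alm_affine : {poly rat} := (m%:R - l%:R)%:P * 'X + L.
Definition Alm_phi : {poly rat} := Alm_affine * negbin 2 K.

Lemma low_series_rec :
  eqmodX K low_series (1 + 'X * ((L * low_series + M * high_series) * low_series)).
Proof.
apply/eqmodX_coefP => -[|i] ltiK; rewrite coefD coef1 coefXM coef_poly ltiK //=.
rewrite add0r nforest_lowS natr_sum coefM; apply: eq_bigr => s _.
have ltsK : (s < K)%N by apply: leq_ltn_trans ltiK; rewrite ltnW // -ltnS.
have ltisK : (i - s < K)%N by apply: leq_ltn_trans ltiK; rewrite ltnW // ltnS leq_subr.
by rewrite coefD !coefCM !coef_poly ltsK ltisK natrM natrD !natrM.
Qed.

Lemma high_series_rec :
  eqmodX K high_series (1 + 'X * (L * low_series * high_series)).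
Proof.
apply/eqmodX_coefP => -[|i] ltiK; rewrite coefD coef1 coefXM coef_poly ltiK //=.
rewrite add0r nforest_highS natr_sum coefM; apply: eq_bigr => s _.
have ltsK : (s < K)%N by apply: leq_ltn_trans ltiK; rewrite ltnW // -ltnS.
have ltisK : (i - s < K)%N by apply: leq_ltn_trans ltiK; rewrite ltnW // ltnS leq_subr.
by rewrite coefCM !coef_poly ltsK ltisK !natrM.
Qed.

Lemma high_series_inv : eqmodX K (high_series * (1 - low_trees)) 1.
Proof.
rewrite /eqmodX (_ : _ * _ - 1 = high_series - (1 + 'X * (L * low_series * high_series))).
  exact: high_series_rec.
by rewrite /low_trees; ring.
Qed.

(* From P (1 - u) = 1 + x m Q P and Q (1 - u) = 1. *)
Lemma low_trees_cubic :
  eqmodX K (low_trees * (1 - low_trees) ^+ 2) ('X * (L + (M - L) * low_trees)).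
Proof.
rewrite /eqmodX (_ : _ - _ = 'X * L * (1 - low_trees)
      * (low_series - (1 + 'X * ((L * low_series + M * high_series) * low_series)))
    + 'X * M * low_trees * (high_series * (1 - low_trees) - 1)).
  by apply: dvdp_add; apply: dvdp_mull; [apply: low_series_rec | apply: high_series_inv].
by rewrite /low_trees; ring.
Qed.

Lemma Alm_phi_comp :
  eqmodX K ((Alm_phi \Po low_trees) * (1 - low_trees) ^+ 2) (L + (M - L) * low_trees).
Proof.
have := eqmodX_comp (L * low_series) (eqmodXM (eqmodX_refl K Alm_affine) (negbin_inv 2 K)).
rewrite mulr1 mulrA -/Alm_phi -/low_trees comp_polyM.
have -> : (1 - 'X) ^+ 2 \Po low_trees = (1 - low_trees) ^+ 2.
  by rewrite rmorphXn rmorphB rmorph1 /= comp_polyX.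
have -> // : Alm_affine \Po low_trees = L + (M - L) * low_trees.
by rewrite comp_polyD comp_polyM !comp_polyC comp_polyX polyCB addrC.
Qed.

(* Cancel (1 - u)^2, whose inverse is Q^2, from [low_trees_cubic] and [Alm_phi_comp]. *)
Lemma low_trees_fix : eqmodX K low_trees ('X * (Alm_phi \Po low_trees)).
Proof.
have := high_series_inv; have := low_trees_cubic; have := Alm_phi_comp; rewrite /eqmodX.
set u := low_trees; set Q := high_series; set phi_u := Alm_phi \Po u.
set lin_u := L + (M - L) * u => phiE cubicE QE.
rewrite (_ : _ - _ = ('X * phi_u - u) * (Q * (1 - u) + 1) * (Q * (1 - u) - 1)
    + Q ^+ 2 * (u * (1 - u) ^+ 2 - 'X * lin_u) - 'X * Q ^+ 2 * (phi_u * (1 - u) ^+ 2 - lin_u)).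
  by apply: dvdp_sub; [apply: dvdp_add|]; apply: dvdp_mull.
by ring.
Qed.

Lemma low_trees_coef n : (0 < n < K)%N ->
  n%:R * (l * nforest_low l m n.-1)%:R = (Alm_phi ^+ n)`_n.-1 :> rat.
Proof.
move=> nK; have := lagrange_burmann (pchar_num _) 'X low_trees_fix nK.
rewrite comp_polyX derivX mul1r => <-; rewrite coefXM; case: n nK => [|n] // /andP [_ ltnK] /=.
by rewrite coefCM coef_poly ltnW // natrM.
Qed.

Lemma high_series_comp : eqmodX K high_series (negbin 1 K \Po low_trees).
Proof.
apply: (eqmodX_inv (d := 1 - low_trees)) high_series_inv _.
have := eqmodX_comp (L * low_series) (negbin_inv 1 K).
by rewrite expr1 comp_polyM comp_polyB comp_polyX -polyC1 !comp_polyC.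
Qed.

Lemma high_series_coef n : (0 < n < K)%N ->
  n%:R * (nforest_high l m n)%:R = (negbin 2 K * Alm_phi ^+ n)`_n.-1 :> rat.
Proof.
move=> nK; have /andP [n_gt0 ltnK] := nK.
have -> : (nforest_high l m n)%:R = high_series`_n by rewrite coef_poly ltnK.
rewrite (eqmodX_coef high_series_comp) // (lagrange_burmann (pchar_num _) _ low_trees_fix nK).
rewrite (eqmodX_coef (eqmodXM (deriv_negbin 1 K) (eqmodX_refl _ (Alm_phi ^+ n)))) ?mulr1n //.
by lia.
Qed.

Lemma coef_negbin_Alm_phiX e n : (0 < n <= K)%N ->
  (negbin e K * Alm_phi ^+ n)`_n.-1 = \sum_(1 <= k < n.+1)
    (m%:R - l%:R) ^+ (n - k) * l%:R ^+ k * 'C(n, k)%:R * 'C(e + 2 * n + k - 2, k - 1)%:R.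
Proof.
move=> /andP [n_gt0 le_nK].
have: eqmodX K (negbin e K * Alm_phi ^+ n) (Alm_affine ^+ n * negbin (e + 2 * n) K).
  rewrite exprMn mulrCA; apply: eqmodXM (eqmodX_refl _ _) _.
  apply: eqmodX_trans (negbinD _ _ _); apply: eqmodXM (eqmodX_refl _ _) _.
  exact: negbinX.
move/eqmodX_coefP => ->; last by lia.
rewrite coef_affine_exp_mul //; apply: eq_big_nat => k /andP [k_gt0 le_kn].
rewrite coef_poly (_ : (k - 1 < K)%N); last by lia.
by rewrite (_ : (e + 2 * n + (k - 1)).-1 = e + 2 * n + k - 2)%N //; lia.
Qed.

End AlmSeries.

Section AlmClosedForms.

Variables l m : nat.

Lemma nforest_low_sum n : (0 < n)%N ->
  n%:R * (l * nforest_low l m n.-1)%:R = \sum_(1 <= k < n.+1)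
    (m%:R - l%:R) ^+ (n - k) * l%:R ^+ k * 'C(n, k)%:R * 'C(2 * n + k - 2, k - 1)%:R :> rat.
Proof.
move=> n_gt0; have nK : (0 < n < n.+1)%N by rewrite n_gt0 ltnSn.
have negbin0 : eqmodX n.+1 (negbin 0 n.+1) (1 : {poly rat}).
  by have := negbin_inv (R := rat) 0 n.+1; rewrite expr0 mulr1.
have /eqmodX_coefP phiE := eqmodXM (eqmodX_sym negbin0) (eqmodX_refl _ (Alm_phi l m n.+1 ^+ n)).
rewrite (low_trees_coef l m nK) -[_ ^+ n]mul1r phiE; last by rewrite prednK ?leqnSn.
by rewrite coef_negbin_Alm_phiX ?n_gt0 ?leqnSn.
Qed.

Lemma nforest_high_sum n : (0 < n)%N ->
  n%:R * (nforest_high l m n)%:R = \sum_(1 <= k < n.+1)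
    (m%:R - l%:R) ^+ (n - k) * l%:R ^+ k * 'C(n, k)%:R * 'C(2 * n + k, k - 1)%:R :> rat.
Proof.
move=> n_gt0; rewrite (@high_series_coef l m n.+1) ?n_gt0 ?ltnSn //.
rewrite coef_negbin_Alm_phiX ?n_gt0 ?leqnSn //.
by apply: eq_big_nat => k _; rewrite add2n addSn addSn !subSS subn0.
Qed.

Let natr_neq0 n : (0 < n)%N -> n%:R != 0 :> rat.
Proof. by rewrite pnatr_eq0 -lt0n. Qed.

Lemma Alm_low_root_count n : (0 < l)%N -> (0 < n)%N ->
  (nforest_low l m n.-1)%:R = n%:R^-1 * \sum_(1 <= k < n.+1)
    ((m%:R - l%:R) ^+ (n - k) * l%:R ^+ (k - 1) * 'C(n, k)%:R
     * 'C(2 * n + k - 2, k - 1)%:R) :> rat.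
Proof.
move=> l_gt0 n_gt0; apply: (mulfI (natr_neq0 l_gt0)).
rewrite mulrCA mulr_sumr -[X in _ = _ * X](eq_big_nat _ _ (F1 := fun k =>
    (m%:R - l%:R) ^+ (n - k) * l%:R ^+ k * 'C(n, k)%:R * 'C(2 * n + k - 2, k - 1)%:R)).
  by rewrite -nforest_low_sum // natrM mulKf ?natr_neq0.
move=> k /andP [k_gt0 _].
have -> : l%:R ^+ k = l%:R * l%:R ^+ (k - 1) :> rat by rewrite -exprS subn1 prednK.
by rewrite mulrCA !mulrA.
Qed.

Lemma Alm_high_root_count n : (1 < n)%N ->
  (nforest_high l m (n - 1))%:R = (n - 1)%:R^-1 * \sum_(1 <= k < n)
    ((m%:R - l%:R) ^+ (n - k - 1) * l%:R ^+ k * 'C(n - 1, k)%:R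
     * 'C(2 * n + k - 2, k - 1)%:R) :> rat.
Proof.
move=> n_gt1; have n1_gt0 : (0 < n - 1)%N by rewrite subn_gt0.
apply: (mulfI (natr_neq0 n1_gt0)); rewrite mulVKf ?natr_neq0 // nforest_high_sum //.
have -> : (n - 1).+1 = n by rewrite subn1 prednK // ltnW.
by apply: eq_big_nat => k _; rewrite subnAC (_ : 2 * (n - 1) + k = 2 * n + k - 2)%N //; lia.
Qed.

Lemma Alm_total_term n k (c : rat) : (0 < k < n)%N ->
  (((2 * m)%:R - l%:R) * n%:R - m%:R * k%:R + (l%:R - m%:R)) / (n%:R * (n - 1)%:R)
    * (m%:R - l%:R) ^+ (n - k - 1) * l%:R ^+ k * 'C(n, k)%:R * c
  = n%:R^-1 * ((m%:R - l%:R) ^+ (n - k) * l%:R ^+ k * 'C(n, k)%:R * c)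
    + m%:R * ((n - 1)%:R^-1
              * ((m%:R - l%:R) ^+ (n - k - 1) * l%:R ^+ k * 'C(n - 1, k)%:R * c)).
Proof.
move=> /andP [k_gt0 lt_kn]; have n_gt0 : (0 < n)%N by apply: leq_trans lt_kn.
have binE : 'C(n - 1, k)%:R = (n%:R - k%:R) * 'C(n, k)%:R / n%:R :> rat.
  apply: (mulIf (natr_neq0 n_gt0)); rewrite mulrC divfK ?natr_neq0 // -natrB ?(ltnW lt_kn) //.
  by rewrite -!natrM subn1 mul_bin_down.
have expE : (m%:R - l%:R) ^+ (n - k) = (m%:R - l%:R) * (m%:R - l%:R) ^+ (n - k - 1) :> rat.
  by rewrite -exprS subn1 prednK ?subn_gt0.
have n1E : (n - 1)%:R = n%:R - 1 :> rat by rewrite natrB.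
rewrite binE expE n1E (natrM _ 2 m).
field; rewrite -n1E !natr_neq0 // subn_gt0.
exact: leq_ltn_trans k_gt0 lt_kn.
Qed.

Lemma Alm_total_count n : (1 < n)%N ->
  (l * nforest_low l m (n - 1) + m * nforest_high l m (n - 1))%:R =
    \sum_(1 <= k < n)
      ((((2 * m)%:R - l%:R) * n%:R - m%:R * k%:R + (l%:R - m%:R)) / (n%:R * (n - 1)%:R)
       * (m%:R - l%:R) ^+ (n - k - 1) * l%:R ^+ k
       * 'C(n, k)%:R * 'C(2 * n + k - 2, k - 1)%:R)
    + (n - 1)%:R / (n%:R * (n - 1)%:R)
       * l%:R ^+ n * 'C(n, n)%:R * 'C(2 * n + n - 2, n - 1)%:R :> rat.
Proof.
move=> n_gt1; have n_gt0 : (0 < n)%N := ltnW n_gt1.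
have n1_gt0 : (0 < n - 1)%N by rewrite subn_gt0.
rewrite natrD [(m * _)%:R]natrM (Alm_high_root_count n_gt1) subn1.
rewrite -[X in X + _](mulKf (natr_neq0 n_gt0)) (nforest_low_sum n_gt0).
rewrite big_nat_recr //= mulrDr -subn1.
rewrite (eq_big_nat _ _ (fun k => Alm_total_term _)) big_split /= -!mulr_sumr.
by rewrite subnn expr0 mul1r; field; rewrite !natr_neq0.
Qed.

End AlmClosedForms.

Unset Implicit Arguments.

Theorem theorem35 (l m n : nat) :
  (0 < l)%N -> (0 < m)%N -> (0 < n)%N ->
  [/\ (forall i : 'I_(l + m), (i < l)%N ->
         exists N : nat, tAi_is (Alm l m) i n N /\
           (N%:R : rat) = (n%:R)^-1 *
             \sum_(1 <= k < n.+1)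
               ((m%:R - l%:R) ^+ (n - k) * (l%:R) ^+ (k - 1)
                * ('C(n, k))%:R * ('C(2 * n + k - 2, k - 1))%:R)),
      (1 < n)%N -> forall i : 'I_(l + m), (l <= i)%N ->
         exists N : nat, tAi_is (Alm l m) i n N /\
           (N%:R : rat) = ((n - 1)%:R)^-1 *
             \sum_(1 <= k < n)
               ((m%:R - l%:R) ^+ (n - k - 1) * (l%:R) ^+ k
                * ('C(n - 1, k))%:R * ('C(2 * n + k - 2, k - 1))%:R) &
      (1 < n)%N ->
         exists N : nat, tA_is (Alm l m) n N /\
           (N%:R : rat) =
             \sum_(1 <= k < n)
               ((((2 * m)%:R - l%:R) * n%:R - m%:R * k%:R + (l%:R - m%:R))
                  / (n%:R * (n - 1)%:R)
                * (m%:R - l%:R) ^+ (n - k - 1) * (l%:R) ^+ k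
                * ('C(n, k))%:R * ('C(2 * n + k - 2, k - 1))%:R)
             + (n - 1)%:R / (n%:R * (n - 1)%:R)
                * (l%:R) ^+ n * ('C(n, n))%:R * ('C(2 * n + n - 2, n - 1))%:R].
Proof.
move=> l_gt0 _ n_gt0; split=> [i lt_il|n_gt1 i le_li|n_gt1].
- exists (nforest_low l m n.-1); split; last exact: Alm_low_root_count.
  by have := has_card_Alm_tree i n.-1; rewrite prednK // /nforest_Alm lt_il.
- exists (nforest_high l m (n - 1)); split; last exact: Alm_high_root_count.
  by have := has_card_Alm_tree i (n - 1); rewrite subn1 prednK // /nforest_Alm ltnNge le_li.
- exists (l * nforest_low l m (n - 1) + m * nforest_high l m (n - 1))%N.
  split; last exact: Alm_total_count.
  by have := has_card_Alm l m (n - 1); rewrite subn1 prednK.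
Qed.
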